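(* Let $m\ge 3$ and let $K\ne\Delta_{[m]}$ be a simplicial complex on $[m]$ such that $f_0(K)<m$ or $f_0(K^\vee)<m$. Then $\chi(\mathrm{Bier}(K))=m-1$ if and only if, after a permutation of $[m]$, $K$ equals one of the following complexes on $[m]$: $\Delta_{[m-1]}$; $\Delta_{[m-2]}$; $\Delta_{[m-1]}\cup\Delta_{[m-2]\cup\{m\}}$ (here $\Delta_I=2^I$). Moreover, in each of these cases $\mathrm{Bier}(K)$ is isomorphic to the $(m-3)$-fold iterated suspension $\Sigma^{m-3}(Z_4)$ of the 4-cycle, i.e. to the boundary complex of the $(m-1)$-dimensional cross-polytope.
   Context: A simplicial complex $K$ on $[m]=\{1,\dots,m\}$ is a nonempty family of subsets of $[m]$ closed under taking subsets; $V(K)=\{i:\{i\}\in K\}$ and $f_0(K)=|V(K)|$ (elements of $[m]\setminus V(K)$ are ghost vertices). Let $[m']=\{1',\dots,m'\}$ be a disjoint copy of $[m]$, $I'=\{i':i\in I\}$. For $K\ne 2^{[m]}$ the Alexander dual $K^\vee$ is the complex on $[m']$ with $J'\in K^\vee$ iff $[m]\setminus J\notin K$. The Bier sphere $\mathrm{Bier}(K)$ is the complex on $[m]\sqcup[m']$ with faces $I\sqcup J'$, $I\in K$, $J'\in K^\vee$, $I\cap J=\varnothing$. The chromatic number $\chi(L)$ is the least number of colors in a map $c\colon V(L)\to C$ with $c(u)\ne c(v)$ whenever $\{u,v\}\in L$. $Z_4$ is the 4-cycle graph; the suspension of $L$ is $\{\varnothing,\{v\},\{w\}\}*L$ for two new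 vertices $v,w$, where $*$ is the join. *)

From HB Require Import structures.
From mathcomp Require Import all_boot fingroup perm.
Set Implicit Arguments. Unset Strict Implicit. Unset Printing Implicit Defensive.

(* A simplicial complex on a finite vertex type T is represented by its set of
   faces, a family of subsets of T. Elements of T not in V(L) are ghost vertices. *)
Definition is_complex (T : finType) (L : {set {set T}}) : Prop :=
  L != set0 /\ forall F G : {set T}, F \in L -> G \subset F -> G \in L.

Definition verts (T : finType) (L : {set {set T}}) : {set T} :=
  [set v | [set v] \in L].

Definition f0 (T : finType) (L : {set {set T}}) : nat := #|verts L|.

Definition simplex (T : finType) (I : {set T}) : {set {set T}} := powerset I.

(* Alexander dual, realised on a copy of [m] (here the same type 'I_m, the
   primes being implicit): J' in K^vee iff [m] \ J notin K. *)
Definition alex_dual (m : nat) (K : {set {set 'I_m}}) : {set {set 'I_m}} :=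
  [set J | ~: J \notin K].

(* Bier sphere on [m] ⊔ [m'] = 'I_m + 'I_m (inl i = i, inr i = i'). *)
Definition bier (m : nat) (K : {set {set 'I_m}}) : {set {set ('I_m + 'I_m)}} :=
  [set F : {set ('I_m + 'I_m)} |
     let I := [set i | inl i \in F] in
     let J := [set j | inr j \in F] in
     [&& I \in K, J \in alex_dual K & [disjoint I & J]]].

Definition colorable (T : finType) (L : {set {set T}}) (k : nat) : Prop :=
  exists c : T -> nat,
    (forall v, v \in verts L -> c v < k) /\
    (forall u v, [set u; v] \in L -> u != v -> c u != c v).

Definition chromatic_number (T : finType) (L : {set {set T}}) (k : nat) : Prop :=
  colorable L k /\ forall k', colorable L k' -> k <= k'.

Definition Z4 : {set {set 'I_4}} :=
  [set F : {set 'I_4} | (#|F| <= 1) ||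
     (F \in [:: [set inord 0; inord 1]; [set inord 1; inord 2];
               [set inord 2; inord 3]; [set inord 3; inord 0]])].

Definition susp (T : finType) (L : {set {set T}}) : {set {set (T + bool)}} :=
  [set G : {set (T + bool)} |
     ([set x | inl x \in G] \in L) && (#|[set b | inr b \in G]| <= 1)].

Fixpoint susp_type (n : nat) : finType :=
  match n with 0 => 'I_4 | n'.+1 => (susp_type n' + bool)%type end.

Fixpoint iter_susp_Z4 (n : nat) : {set {set (susp_type n)}} :=
  match n return {set {set (susp_type n)}} with
  | 0 => Z4
  | n'.+1 => susp (iter_susp_Z4 n')
  end.

(* isomorphism of simplicial complexes (ghost vertices ignored) *)
Definition sc_iso (T1 T2 : finType) (L1 : {set {set T1}}) (L2 : {set {set T2}}) : Prop :=
  exists f : T1 -> T2,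
    {in verts L1 &, injective f} /\ f @: verts L1 = verts L2 /\
    (forall F : {set T1}, F \subset verts L1 -> (F \in L1 <-> f @: F \in L2)).

Definition relabel (m : nat) (s : {perm 'I_m}) (K : {set {set 'I_m}}) : {set {set 'I_m}} :=
  [set (s : 'I_m -> 'I_m) @: F | F : {set 'I_m} in K].

(* [k] = {1,...,k} as a subset of [m] (0-based: values < k) *)
Definition first (m k : nat) : {set 'I_m} := [set i : 'I_m | i < k].

From mathcomp Require Import all_boot fingroup perm zify.
Set Implicit Arguments. Unset Strict Implicit. Unset Printing Implicit Defensive.

(* Up to relabelling, the three complexes of the theorem are Δ_{[m]∖a},
   Δ_{[m]∖{a,b}} and Δ_{[m]∖a} ∪ Δ_{[m]∖b}.  For each of them the vertices of
   Bier(K) split into m - 1 pairs such that a set of vertices is a face iff it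
   contains no pair: Bier(K) is the boundary of the (m-1)-dimensional
   cross-polytope, and so is Σ^{m-3} Z_4.  Such a complex has chromatic number
   m - 1: one colour per pair suffices, and one vertex from each pair gives an
   (m-1)-clique.

   Conversely, since Bier(K^∨) is Bier(K) with the two copies of [m] swapped,
   we may assume that K has a ghost vertex g.  If [m]∖g ∈ K, then K = Δ_{[m]∖g}.
   Otherwise the vertices j' with j ≠ g form an (m-1)-clique of Bier(K), so a
   proper (m-1)-colouring gives g' the colour of some a' with a ≠ g; as {a', g'}
   is not an edge, [m]∖{a,g} ∈ K.  Every vertex i of K gets the colour of i' and
   is adjacent to g', so i ≠ a and K = Δ_{[m]∖{a,g}}. *)

(** * Simplicial complexes and colourings *)

Lemma in_verts (T : finType) (L : {set {set T}}) v : (v \in verts L) = ([set v] \in L).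
Proof. by rewrite inE. Qed.

Lemma complex_set0 (T : finType) (L : {set {set T}}) : is_complex L -> set0 \in L.
Proof. by case=> /set0Pn [F FL] L_closed; apply: L_closed FL (sub0set F). Qed.

Lemma faces_sub_verts (T : finType) (L : {set {set T}}) :
  (forall F G : {set T}, F \in L -> G \subset F -> G \in L) ->
  forall F : {set T}, F \in L -> F \subset verts L.
Proof.
by move=> L_closed F FL; apply/subsetP => v vF; rewrite in_verts (L_closed F) ?sub1set.
Qed.

Lemma clique_card_leq (T : finType) (L : {set {set T}}) (C : {set T}) k :
  (forall u v, u \in C -> v \in C -> [set u; v] \in L) -> colorable L k -> #|C| <= k.
Proof.
move=> clique [c [c_lt c_proper]].
have c_inj : {in C &, injective c}.
  move=> u v uC vC; apply: contra_eq => uv.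
  exact: c_proper (clique u v uC vC) uv.
have CV u : u \in C -> u \in verts L by move=> uC; rewrite in_verts -[[set u]]setUid clique.
rewrite cardE -(size_map c) -(size_iota 0 k) uniq_leq_size //.
  by rewrite map_inj_in_uniq ?enum_uniq // => u v; rewrite !mem_enum; apply: c_inj.
by move=> x /mapP [u]; rewrite mem_enum => uC ->; rewrite mem_iota add0n c_lt ?CV.
Qed.

Lemma card_inj_in_onto (A : finType) (f : A -> nat) (S : {set A}) n :
  {in S &, injective f} -> #|S| = n -> {in S, forall x, f x < n} ->
  forall k, k < n -> exists2 x, x \in S & f x = k.
Proof.
move=> f_inj cardS f_lt k kn.
have f_uniq : uniq (map f (enum S)).
  by rewrite map_inj_in_uniq ?enum_uniq // => x y; rewrite !mem_enum; apply: f_inj.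
have f_sub : {subset map f (enum S) <= iota 0 n}.
  by move=> y /mapP [x]; rewrite mem_enum => xS ->; rewrite mem_iota add0n f_lt.
have [|_ f_onto] := uniq_min_size f_uniq f_sub.
  by rewrite size_map size_iota -cardE cardS.
have : k \in map f (enum S) by rewrite f_onto mem_iota add0n.
by case/mapP => x; rewrite mem_enum => xS ->; exists x.
Qed.

(** * Cross-polytopes *)

Definition antipodal_free (T P : finType) (g : P * bool -> T) (F : {set T}) : bool :=
  [forall p, ~~ ((g (p, false) \in F) && (g (p, true) \in F))].

(* [L] is the boundary of the cross-polytope whose antipodal vertex pairs are
   [g (p, false)], [g (p, true)]; [e] inverts [g] on the vertices of [L]. *)
Definition cross_polytope (T P : finType) (L : {set {set T}})
    (g : P * bool -> T) (e : T -> P * bool) : Prop :=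
  [/\ forall F : {set T}, F \in L -> F \subset verts L,
      forall q, g q \in verts L,
      cancel g e,
      {in verts L, cancel e g} &
      forall F : {set T}, F \subset verts L -> (F \in L) = antipodal_free g F].

Lemma cross_polytope_chromatic (T P : finType) (L : {set {set T}}) (g : P * bool -> T) e :
  cross_polytope L g e -> chromatic_number L #|P|.
Proof.
case=> L_verts g_verts gK eK L_free; split.
  exists (fun x => enum_rank (e x).1 : nat); split=> [v _ | u v uvL uv]; first exact: ltn_ord.
  have /subsetP uvV := L_verts _ uvL.
  have uV : u \in verts L by apply: uvV; rewrite !inE eqxx.
  have vV : v \in verts L by apply: uvV; rewrite !inE eqxx orbT.
  apply: contra uv => /eqP /val_inj /enum_rank_inj same_p.
  have := L_free _ (L_verts _ uvL); rewrite uvL => /esym /forallP free.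
  case: (e u) (eK u uV) same_p => p b gu; case: (e v) (eK v vV) => p' b' gv /= pp'; subst p'.
  by move: (free p); case: b b' gu gv => [] [] <- <-; rewrite ?eqxx // !inE !eqxx ?orbT.
move=> k col; pose C := [set g (p, false) | p : P].
have <- : #|C| = #|P| by rewrite card_imset // => p1 p2 /(congr1 e); rewrite !gK => -[].
apply: clique_card_leq col => _ _ /imsetP [p1 _ ->] /imsetP [p2 _ ->].
rewrite L_free; last by apply/subsetP => x /set2P [] ->.
apply/forallP => p; rewrite !inE; apply/negP => /andP [_].
by case/orP => /eqP /(congr1 e); rewrite !gK.
Qed.

Lemma cross_polytope_iso (T1 T2 P1 P2 : finType)
    (L1 : {set {set T1}}) (L2 : {set {set T2}})
    (g1 : P1 * bool -> T1) e1 (g2 : P2 * bool -> T2) e2 :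
  #|P1| = #|P2| -> cross_polytope L1 g1 e1 -> cross_polytope L2 g2 e2 -> sc_iso L1 L2.
Proof.
move=> cardP [_ g1V g1K e1K L1_free] [_ g2V g2K e2K L2_free].
pose h (p : P1) : P2 := enum_val (cast_ord cardP (enum_rank p)).
have [h' hK h'K] : bijective h.
  apply: inj_card_bij; last by rewrite cardP.
  by move=> p1 p2 /enum_val_inj /cast_ord_inj /enum_rank_inj.
pose hq (q : P1 * bool) := (h q.1, q.2).
pose hq' (q : P2 * bool) := (h' q.1, q.2).
have hqK : cancel hq hq' by case=> p s; rewrite /hq /hq' /= hK.
have hq'K : cancel hq' hq by case=> p s; rewrite /hq /hq' /= h'K.
exists (fun x => g2 (hq (e1 x))); split.
  move=> x y xV yV /(congr1 e2); rewrite !g2K => /(can_inj hqK) exy.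
  by rewrite -(e1K x xV) -(e1K y yV) exy.
split.
  apply/setP => y; apply/imsetP/idP => [[x _ ->] // | yV].
  by exists (g1 (hq' (e2 y))); rewrite ?g1V // g1K hq'K e2K.
move=> F FV.
have FV2 : [set g2 (hq (e1 x)) | x in F] \subset verts L2.
  by apply/subsetP => _ /imsetP [x _ ->].
have mem_img q : (g2 q \in [set g2 (hq (e1 x)) | x in F]) = (g1 (hq' q) \in F).
  apply/imsetP/idP => [[x xF /(congr1 e2)] | qF].
    by rewrite !g2K => ->; rewrite hqK e1K // (subsetP FV).
  by exists (g1 (hq' q)); rewrite // g1K hq'K.
rewrite (L1_free F FV) (L2_free _ FV2); split => /forallP free; apply/forallP => p.
  by rewrite !mem_img; apply: free.
by have := free (h p); rewrite !mem_img /hq' /= hK.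
Qed.

Definition full_cross_polytope (T P : finType) (L : {set {set T}})
    (g : P * bool -> T) (e : T -> P * bool) : Prop :=
  [/\ cancel g e, cancel e g & forall F : {set T}, (F \in L) = antipodal_free g F].

Lemma full_cross_polytopeW (T P : finType) (L : {set {set T}}) (g : P * bool -> T) e :
  full_cross_polytope L g e -> cross_polytope L g e.
Proof.
case=> gK eK L_free.
have vertsT : verts L = setT.
  apply/setP => v; rewrite in_verts inE L_free; apply/forallP => p; rewrite !inE.
  by apply/negP => /andP [/eqP v0 /eqP v1]; have := congr1 e (etrans v0 (esym v1)); rewrite !gK.
by split; rewrite ?vertsT // => [F _|q|x _]; rewrite ?subsetT ?inE ?eK.
Qed.

(** * Iterated suspensions of the 4-cycle *)

Lemma inord_eq4 a b : a < 4 -> b < 4 -> (inord a == inord b :> 'I_4) = (a == b).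
Proof. by move=> a4 b4; rewrite -val_eqE /= !inordK. Qed.

Lemma ord4P (j : 'I_4) : [\/ j = inord 0, j = inord 1, j = inord 2 | j = inord 3].
Proof.
case: j => [[|[|[|[|j]]]] j4] //;
  [constructor 1 | constructor 2 | constructor 3 | constructor 4]; exact/val_inj/esym/inordK.
Qed.

Lemma mem_Z4 (F : {set 'I_4}) : (F \in Z4) =
  ~~ ((inord 0 \in F) && (inord 2 \in F)) && ~~ ((inord 1 \in F) && (inord 3 \in F)).
Proof.
rewrite inE; apply/idP/idP.
  case/orP => [/card_le1_eqP F1 | ].
    by apply/andP; split; apply/negP => /andP [/F1 F_ /F_ /eqP]; rewrite inord_eq4.
  by rewrite !inE => /or4P [] /eqP ->; rewrite !inE !inord_eq4.
case/andP => no02 no13.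
(* [F] meets each antipodal pair {0, 2}, {1, 3} at most once, so it lies in the edge {a, b}. *)
pose a : 'I_4 := if inord 2 \in F then inord 2 else inord 0.
pose b : 'I_4 := if inord 3 \in F then inord 3 else inord 1.
have ab : a != b by rewrite /a /b; do 2 case: ifP => _; rewrite inord_eq4.
have Fab : F \subset [set a; b].
  apply/subsetP => j jF; rewrite !inE /a /b.
  case: (ord4P j) jF => -> jF.
  - by move: no02; rewrite jF /= => /negbTE ->; rewrite eqxx.
  - by move: no13; rewrite jF /= => /negbTE ->; rewrite eqxx orbT.
  - by rewrite jF eqxx.
  - by rewrite jF eqxx orbT.
apply/orP; case: (leqP #|F| 1) => [F1 | F2]; [by left | right].
have -> : F = [set a; b] by apply/eqP; rewrite eqEcard Fab cards2 ab.
by rewrite !inE /a /b; do 2 case: ifP => _; rewrite ?eqxx ?orbT // setUC eqxx ?orbT.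
Qed.

Lemma Z4_full_cross_polytope :
  full_cross_polytope Z4 (fun q : bool * bool => inord (q.1 + 2 * q.2))
                         (fun i : 'I_4 => (odd i, 1 < i)).
Proof.
split.
- by case=> [] [] []; rewrite /= (@inordK 3).
- by move=> i; case: (ord4P i) => ->; apply/val_inj; rewrite /= !(@inordK 3).
move=> F; rewrite mem_Z4; apply/andP/forallP => [[no02 no13] [] // | free].
by split; [apply: (free false) | apply: (free true)].
Qed.

Definition susp_vertex (T P : finType) (g : P * bool -> T) (q : option P * bool) : T + bool :=
  if q.1 is Some p then inl (g (p, q.2)) else inr q.2.

Definition susp_coord (T P : finType) (e : T -> P * bool) (x : T + bool) : option P * bool :=
  match x with inl y => (Some (e y).1, (e y).2) | inr s => (None, s) end.

Lemma card_set_bool_le1 (P : pred bool) : (#|[set b | P b]| <= 1) = ~~ (P false && P true).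
Proof.
rewrite cardsE cardE /enum_mem -enumT enumT unlock /= !unfold_in.
by case: (P true); case: (P false).
Qed.

Lemma susp_full_cross_polytope (T P : finType) (L : {set {set T}}) (g : P * bool -> T) e :
  full_cross_polytope L g e ->
  full_cross_polytope (susp L) (susp_vertex g) (susp_coord e).
Proof.
case=> gK eK L_free; split.
- by case=> [[p|] s] //=; rewrite gK.
- by case=> [y|s] //; rewrite /susp_vertex /= -surjective_pairing eK.
move=> G; rewrite inE card_set_bool_le1 L_free.
apply/andP/forallP => [[/forallP free no_inr] [p|] | free].
- by have := free p; rewrite !inE.
- exact: no_inr.
- by split; [apply/forallP => p; have := free (Some p); rewrite !inE | apply: (free None)].
Qed.

Fixpoint susp_index (k : nat) : finType :=
  if k is k'.+1 then option (susp_index k') else bool.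

Lemma card_susp_index k : #|susp_index k| = k.+2.
Proof. by elim: k => [|k IHk] /=; rewrite ?card_bool ?card_option ?IHk. Qed.

Lemma iter_susp_Z4_cross_polytope k :
  exists (g : susp_index k * bool -> susp_type k) e, cross_polytope (iter_susp_Z4 k) g e.
Proof.
suff [g [e /full_cross_polytopeW]] : exists (g : susp_index k * bool -> susp_type k) e,
  full_cross_polytope (iter_susp_Z4 k) g e by exists g, e.
elim: k => [|k [g [e IHk]]]; first by do 2 eexists; apply: Z4_full_cross_polytope.
by do 2 eexists; apply: susp_full_cross_polytope IHk.
Qed.

(** * Bier spheres *)

Lemma mem_alex_dual m (K : {set {set 'I_m}}) J : (J \in alex_dual K) = (~: J \notin K).
Proof. by rewrite inE. Qed.

Lemma alex_dualK m : involutive (@alex_dual m).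
Proof. by move=> K; apply/setP => J; rewrite !inE setCK negbK. Qed.

Lemma alex_dual_complex m (K : {set {set 'I_m}}) :
  is_complex K -> K != simplex [set: 'I_m] -> is_complex (alex_dual K).
Proof.
move=> [_ K_closed] K_full; split.
  apply/set0Pn; have [F FK | K_all] := pickP [pred F | F \notin K].
    by exists (~: F); rewrite mem_alex_dual setCK.
  case/eqP: K_full; apply/setP => F.
  by rewrite /simplex powersetE subsetT; move/negbFE: (K_all F).
move=> F G; rewrite !mem_alex_dual => FK GF; apply: contra FK => GK.
by apply: K_closed GK _; rewrite setCS.
Qed.

Lemma mem_bier m (K : {set {set 'I_m}}) F :
  (F \in bier K) = [&& [set i | inl i \in F] \in K, [set j | inr j \in F] \in alex_dual K
                      & [disjoint [set i | inl i \in F] & [set j | inr j \in F]]].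
Proof. by rewrite inE. Qed.

Lemma bier_closed m (K : {set {set 'I_m}}) :
  (forall F G : {set 'I_m}, F \in K -> G \subset F -> G \in K) ->
  forall F G : {set 'I_m + 'I_m}, F \in bier K -> G \subset F -> G \in bier K.
Proof.
move=> K_closed F G; rewrite !mem_bier => /and3P [FK FK' dF] /subsetP GF.
have sub_inl : [set i | inl i \in G] \subset [set i | inl i \in F].
  by apply/subsetP => i; rewrite !inE => /GF.
have sub_inr : [set j | inr j \in G] \subset [set j | inr j \in F].
  by apply/subsetP => j; rewrite !inE => /GF.
rewrite (K_closed _ _ FK sub_inl) (disjointW sub_inl sub_inr dF) andbT.
by move: FK'; rewrite !mem_alex_dual; apply: contra => /K_closed; apply; rewrite setCS.
Qed.

Definition swap_copy m (x : 'I_m + 'I_m) : 'I_m + 'I_m :=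
  match x with inl i => inr i | inr i => inl i end.

Arguments swap_copy {m} x.

Lemma swap_copyK m : involutive (@swap_copy m). Proof. by case. Qed.

Lemma bier_alex_dual m (K : {set {set 'I_m}}) F :
  (F \in bier (alex_dual K)) = (swap_copy @^-1: F \in bier K).
Proof.
have proj_inl : [set i | inl i \in swap_copy @^-1: F] = [set j | inr j \in F].
  by apply/setP => i; rewrite !inE.
have proj_inr : [set j | inr j \in swap_copy @^-1: F] = [set i | inl i \in F].
  by apply/setP => j; rewrite !inE.
by rewrite !mem_bier alex_dualK proj_inl proj_inr disjoint_sym andbCA.
Qed.

Lemma preimset_swap_copy m (A : {set 'I_m + 'I_m}) :
  swap_copy @^-1: A = swap_copy @: A.
Proof. by rewrite (can2_imset_pre _ (@swap_copyK m) (@swap_copyK m)). Qed.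

Lemma verts_bier_alex_dual m (K : {set {set 'I_m}}) v :
  (v \in verts (bier (alex_dual K))) = (swap_copy v \in verts (bier K)).
Proof. by rewrite !in_verts bier_alex_dual preimset_swap_copy imset_set1. Qed.

Lemma cross_polytope_bier_alex_dual m (P : finType) (K : {set {set 'I_m}})
    (g : P * bool -> 'I_m + 'I_m) e :
  cross_polytope (bier K) g e ->
  cross_polytope (bier (alex_dual K)) (swap_copy \o g) (e \o swap_copy).
Proof.
case=> faces_verts g_verts gK eK bier_free; split.
- move=> F; rewrite bier_alex_dual => /faces_verts /subsetP sub.
  by apply/subsetP => v vF; rewrite verts_bier_alex_dual sub // inE swap_copyK.
- by move=> q; rewrite verts_bier_alex_dual /= swap_copyK.
- by move=> q /=; rewrite swap_copyK.
- by move=> x; rewrite verts_bier_alex_dual => /eK /= ->; rewrite swap_copyK.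
move=> F /subsetP FV; rewrite bier_alex_dual bier_free.
  by apply: eq_forallb => p; rewrite !inE.
by apply/subsetP => v; rewrite inE => /FV; rewrite verts_bier_alex_dual swap_copyK.
Qed.

Lemma colorable_bier_alex_dual m (K : {set {set 'I_m}}) k :
  colorable (bier K) k -> colorable (bier (alex_dual K)) k.
Proof.
case=> c [c_lt c_proper]; exists (c \o swap_copy); split=> [v|u v].
  by rewrite verts_bier_alex_dual; apply: c_lt.
rewrite bier_alex_dual preimset_swap_copy imsetU !imset_set1 => /c_proper uv_edge uv.
by apply: uv_edge; rewrite (inj_eq (can_inj (@swap_copyK m))).
Qed.

Lemma mem_bier_sum m (K : {set {set 'I_m}}) (I J : {set 'I_m}) :
  (inl @: I :|: inr @: J \in bier K) = [&& I \in K, J \in alex_dual K & [disjoint I & J]].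
Proof.
have proj_inl : [set i | inl i \in inl @: I :|: inr @: J] = I.
  apply/setP => i; rewrite !inE mem_imset; last exact: inl_inj.
  by rewrite (_ : inl i \in inr @: J = false) ?orbF //; apply/imsetP => -[].
have proj_inr : [set j | inr j \in inl @: I :|: inr @: J] = J.
  apply/setP => j; rewrite !inE [inr j \in inr @: J]mem_imset; last exact: inr_inj.
  by rewrite (_ : inr j \in inl @: I = false) //; apply/imsetP => -[].
by rewrite mem_bier proj_inl proj_inr.
Qed.

Lemma bier_vertex_inl m (K : {set {set 'I_m}}) i :
  (inl i \in verts (bier K)) = ([set i] \in K) && (set0 \in alex_dual K).
Proof.
rewrite in_verts -[[set inl i]]setU0 -(imset0 inr) -imset_set1 mem_bier_sum.
by rewrite disjoint_sym eq_disjoint0 ?andbT // => x; rewrite inE.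
Qed.

Lemma bier_vertex_inr m (K : {set {set 'I_m}}) j :
  (inr j \in verts (bier K)) = (set0 \in K) && ([set j] \in alex_dual K).
Proof.
rewrite in_verts -[[set inr j]]set0U -(imset0 inl) -imset_set1 mem_bier_sum.
by rewrite eq_disjoint0 ?andbT // => x; rewrite inE.
Qed.

Lemma bier_edge_inr m (K : {set {set 'I_m}}) i j :
  ([set inr i; inr j] \in bier K) = (set0 \in K) && ([set i; j] \in alex_dual K).
Proof.
rewrite -[[set inr i; inr j]]set0U -(imset0 inl) -!imset_set1 -imsetU mem_bier_sum.
by rewrite eq_disjoint0 ?andbT // => x; rewrite inE.
Qed.

Lemma bier_edge_inl_inr m (K : {set {set 'I_m}}) i j :
  ([set inl i; inr j] \in bier K) = [&& [set i] \in K, [set j] \in alex_dual K & i != j].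
Proof. by rewrite -!imset_set1 mem_bier_sum disjoints1 in_set1. Qed.

Definition simplex_del1 m (a : 'I_m) : {set {set 'I_m}} := simplex (~: [set a]).
Definition simplex_del2 m (a b : 'I_m) : {set {set 'I_m}} := simplex (~: [set a; b]).
Definition simplex_del1U m (a b : 'I_m) : {set {set 'I_m}} :=
  simplex_del1 a :|: simplex_del1 b.

Lemma mem_simplex_del1 m (a : 'I_m) J : (J \in simplex_del1 a) = (a \notin J).
Proof. by rewrite /simplex_del1 /simplex powersetE subsetC sub1set inE. Qed.

Lemma mem_simplex_del2 m (a b : 'I_m) J :
  (J \in simplex_del2 a b) = (a \notin J) && (b \notin J).
Proof. by rewrite /simplex_del2 /simplex powersetE subsetC subUset !sub1set !inE. Qed.

Lemma mem_simplex_del1U m (a b : 'I_m) J :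
  (J \in simplex_del1U a b) = (a \notin J) || (b \notin J).
Proof. by rewrite inE !mem_simplex_del1. Qed.

Lemma alex_dual_simplex_del1 m (a : 'I_m) : alex_dual (simplex_del1 a) = simplex_del1 a.
Proof. by apply/setP => J; rewrite mem_alex_dual !mem_simplex_del1 inE negbK. Qed.

Lemma alex_dual_simplex_del2 m (a b : 'I_m) :
  alex_dual (simplex_del2 a b) = simplex_del1U a b.
Proof.
apply/setP => J; rewrite mem_alex_dual mem_simplex_del2 mem_simplex_del1U.
by rewrite !inE !negbK negb_and.
Qed.

Lemma simplex_closed T (A F G : {set T}) :
  F \in simplex A -> G \subset F -> G \in simplex A.
Proof. by rewrite /simplex !powersetE => FA /subset_trans; apply. Qed.

Section StandardBierSpheres.

Variable n : nat.
Implicit Types a b i : 'I_n.+2.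

Definition unlift_ord a i : 'I_n.+1 := odflt ord0 (unlift a i).

Lemma unlift_ordK a : cancel (lift a) (unlift_ord a).
Proof. by move=> p; rewrite /unlift_ord liftK. Qed.

Lemma lift_unlift_ord a i : i != a -> lift a (unlift_ord a i) = i.
Proof. by rewrite eq_sym => /unlift_some [j -> E]; rewrite /unlift_ord E. Qed.

Definition copy_index (x : 'I_n.+2 + 'I_n.+2) : 'I_n.+2 := match x with inl i | inr i => i end.

Definition del1_vertex a (q : 'I_n.+1 * bool) : 'I_n.+2 + 'I_n.+2 :=
  (if q.2 then inr else inl) (lift a q.1).

Definition del1_coord a (x : 'I_n.+2 + 'I_n.+2) : 'I_n.+1 * bool :=
  (unlift_ord a (copy_index x), if x is inr _ then true else false).

Lemma verts_bier_simplex_del1 a x :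
  (x \in verts (bier (simplex_del1 a))) = (copy_index x != a).
Proof.
case: x => i; rewrite ?bier_vertex_inl ?bier_vertex_inr alex_dual_simplex_del1;
  by rewrite !mem_simplex_del1 !inE ?andbT //= eq_sym.
Qed.

Lemma bier_simplex_del1_cross_polytope a :
  cross_polytope (bier (simplex_del1 a)) (del1_vertex a) (del1_coord a).
Proof.
have faces_verts := faces_sub_verts (bier_closed (@simplex_closed _ (~: [set a]))).
split=> //.
- by case=> p s; rewrite verts_bier_simplex_del1; case: s; rewrite /= eq_sym neq_lift.
- by case=> p [] /=; rewrite /del1_coord /= unlift_ordK.
- by case=> i; rewrite verts_bier_simplex_del1 => ia; rewrite /del1_vertex /= lift_unlift_ord.
move=> F /subsetP FV.
have notF x : copy_index x = a -> x \notin F.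
  by move=> xa; apply/negP => /FV; rewrite verts_bier_simplex_del1 xa eqxx.
rewrite mem_bier alex_dual_simplex_del1 !mem_simplex_del1 !inE !notF //=.
rewrite disjoints_subset; apply/subsetP/forallP => [dF p | free i].
  by apply/negP => /andP [lF rF]; have := dF (lift a p); rewrite !inE lF rF => /(_ isT).
rewrite !inE; case: (eqVneq i a) => [-> | ia]; first by rewrite notF.
have := free (unlift_ord a i); rewrite /del1_vertex /= lift_unlift_ord //.
by case/nandP => [/negbTE -> | ->].
Qed.

(* The antipodal pairs are [inl i, inr i] for [i] outside [{a, b}], and [inr a, inr b]. *)
Definition del2_vertex a b (q : 'I_n.+1 * bool) : 'I_n.+2 + 'I_n.+2 :=
  if q.2 then inr (lift a q.1) else if lift a q.1 == b then inr a else inl (lift a q.1).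

Definition del2_coord a b (x : 'I_n.+2 + 'I_n.+2) : 'I_n.+1 * bool :=
  match x with
  | inl i => (unlift_ord a i, false)
  | inr i => if i == a then (unlift_ord a b, false) else (unlift_ord a i, true)
  end.

Lemma verts_bier_simplex_del2 a b x : a != b ->
  (x \in verts (bier (simplex_del2 a b))) = if x is inl i then (i != a) && (i != b) else true.
Proof.
move=> ab; case: x => i; rewrite ?bier_vertex_inl ?bier_vertex_inr alex_dual_simplex_del2.
  by rewrite mem_simplex_del2 mem_simplex_del1U !inE andbT ![_ == i]eq_sym.
rewrite mem_simplex_del2 mem_simplex_del1U !inE.
by case: (eqVneq a i) => [<- | //]; rewrite eq_sym ab.
Qed.

Lemma bier_simplex_del2_cross_polytope a b : a != b ->
  cross_polytope (bier (simplex_del2 a b)) (del2_vertex a b) (del2_coord a b).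
Proof.
move=> ab; have ba : b != a by rewrite eq_sym.
have faces_verts := faces_sub_verts (bier_closed (@simplex_closed _ (~: [set a; b]))).
split=> //.
- case=> p [] /=; rewrite /del2_vertex /= (verts_bier_simplex_del2 _ ab) //.
  by case: ifP => // /negbT ->; rewrite eq_sym neq_lift.
- case=> p [] /=; rewrite /del2_vertex /=.
    by rewrite eq_sym (negbTE (neq_lift a p)) unlift_ordK.
  by case: eqP => [<- | _] /=; rewrite ?eqxx unlift_ordK.
- case=> i; rewrite (verts_bier_simplex_del2 _ ab) /=.
    by case/andP => ia ib; rewrite /del2_vertex /= lift_unlift_ord // (negbTE ib).
  by case: (eqVneq i a) => [-> | ia] _; rewrite /del2_vertex /= lift_unlift_ord ?eqxx.
move=> F /subsetP FV.
have notF i : (i == a) || (i == b) -> inl i \notin F.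
  by move=> iab; apply/negP => /FV; rewrite (verts_bier_simplex_del2 _ ab) -negb_or iab.
rewrite mem_bier alex_dual_simplex_del2 mem_simplex_del2 mem_simplex_del1U !inE.
rewrite !notF ?eqxx ?orbT //= disjoints_subset.
apply/andP/forallP => [[ab_F /subsetP dF] p | free].
  rewrite /del2_vertex /=; case: eqP => [-> | _]; first by rewrite negb_and.
  by apply/negP => /andP [lF rF]; have := dF (lift a p); rewrite !inE lF rF => /(_ isT).
split.
  have := free (unlift_ord a b).
  by rewrite /del2_vertex /= lift_unlift_ord // eqxx negb_and.
apply/subsetP => i; rewrite !inE.
case: (eqVneq i a) => [-> | ia]; first by rewrite (negbTE (notF _ _)) // eqxx.
case: (eqVneq i b) => [-> | ib]; first by rewrite (negbTE (notF _ _)) // eqxx orbT.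
have := free (unlift_ord a i); rewrite /del2_vertex /= lift_unlift_ord // (negbTE ib).
by case/nandP => [/negbTE -> | ->].
Qed.

End StandardBierSpheres.

Definition standard_complex m (K : {set {set 'I_m}}) : Prop :=
  [\/ exists a, K = simplex_del1 a,
      exists a b, a != b /\ K = simplex_del2 a b |
      exists a b, a != b /\ K = simplex_del1U a b].

Lemma standard_complex_alex_dual m (K : {set {set 'I_m}}) :
  standard_complex (alex_dual K) -> standard_complex K.
Proof.
rewrite -{2}[K]alex_dualK.
case=> [[a ->] | [a [b [ab ->]]] | [a [b [ab ->]]]].
- by constructor 1; exists a; rewrite alex_dual_simplex_del1.
- by constructor 3; exists a, b; rewrite alex_dual_simplex_del2.
- by constructor 2; exists a, b; rewrite -alex_dual_simplex_del2 alex_dualK.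
Qed.

Lemma standard_bier_cross_polytope n (K : {set {set 'I_n.+2}}) :
  standard_complex K -> exists g (e : _ -> 'I_n.+1 * bool), cross_polytope (bier K) g e.
Proof.
case=> [[a ->] | [a [b [ab ->]]] | [a [b [ab ->]]]]; do 2 eexists.
- exact: bier_simplex_del1_cross_polytope.
- exact: bier_simplex_del2_cross_polytope.
- rewrite -alex_dual_simplex_del2.
  exact/cross_polytope_bier_alex_dual/bier_simplex_del2_cross_polytope.
Qed.

Lemma standard_bier_chromatic n (K : {set {set 'I_n.+2}}) :
  standard_complex K -> chromatic_number (bier K) n.+1.
Proof.
by case/standard_bier_cross_polytope => g [e /cross_polytope_chromatic]; rewrite card_ord.
Qed.

Lemma standard_bier_sc_iso k (K : {set {set 'I_k.+3}}) :
  standard_complex K -> sc_iso (bier K) (iter_susp_Z4 k).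
Proof.
case/standard_bier_cross_polytope => g [e bier_cross].
have [g' [e' susp_cross]] := iter_susp_Z4_cross_polytope k.
by apply: cross_polytope_iso bier_cross susp_cross; rewrite card_ord card_susp_index.
Qed.

(** * Complexes with a ghost vertex *)

Section GhostVertex.

Variables (m : nat) (K : {set {set 'I_m}}) (g : 'I_m).
Hypotheses (K_complex : is_complex K) (g_ghost : [set g] \notin K).

Lemma ghost_notin_face F : F \in K -> g \notin F.
Proof. by move=> FK; apply: contra g_ghost => gF; apply: K_complex.2 FK _; rewrite sub1set. Qed.

Lemma ghost_cofacet : ~: [set g] \in K -> K = simplex_del1 g.
Proof.
move=> cofacetK; apply/setP => J; rewrite mem_simplex_del1; apply/idP/idP.
  exact: ghost_notin_face.
by move=> gJ; apply: K_complex.2 cofacetK _; rewrite subsetC sub1set inE.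
Qed.

Section Colouring.

Hypothesis cofacet_notin : ~: [set g] \notin K.
Variable c : 'I_m + 'I_m -> nat.
Hypotheses (c_lt : forall v, v \in verts (bier K) -> c v < m.-1)
           (c_proper : forall u v, [set u; v] \in bier K -> u != v -> c u != c v).

Lemma bier_ghost_inr_vertex j : inr j \in verts (bier K).
Proof.
rewrite bier_vertex_inr complex_set0 // mem_alex_dual.
case: (eqVneq j g) => [-> // | jg].
by apply/negP => /ghost_notin_face; rewrite !inE eq_sym jg.
Qed.

Lemma bier_ghost_inr_edge i j : i != g -> j != g -> [set inr i; inr j] \in bier K.
Proof.
move=> ig jg; rewrite bier_edge_inr complex_set0 // mem_alex_dual.
by apply/negP => /ghost_notin_face; rewrite !inE negb_or !(eq_sym g) ig jg.
Qed.

Lemma bier_ghost_inl_inr_edge i j :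
  [set i] \in K -> j != g -> i != j -> [set inl i; inr j] \in bier K.
Proof.
move=> iK jg ij; rewrite bier_edge_inl_inr iK ij mem_alex_dual andbT.
by apply/negP => /ghost_notin_face; rewrite !inE eq_sym jg.
Qed.

(* The [m - 1] vertices [inr j], [j != g], form a clique, so they use up all colours. *)
Lemma colour_inr_onto k : k < m.-1 -> exists2 j, j != g & c (inr j) = k.
Proof.
have inr_inj : {in ~: [set g] &, injective (c \o inr)}.
  move=> i j; rewrite !inE => ig jg /=; apply: contra_eq => ij.
  exact: c_proper (bier_ghost_inr_edge ig jg) _.
move=> /(card_inj_in_onto inr_inj) [| x _ | j]; rewrite ?inE.
- by rewrite cardsC1 card_ord.
- exact: c_lt (bier_ghost_inr_vertex x).
- by exists j.
Qed.

Lemma colour_inl i : [set i] \in K -> c (inl i) = c (inr i).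
Proof.
move=> iK; have ig : i != g by apply: contraNneq g_ghost => <-.
have iV : inl i \in verts (bier K).
  rewrite bier_vertex_inl iK mem_alex_dual setC0.
  by apply/negP => /ghost_notin_face; rewrite inE.
have [j jg cj] := colour_inr_onto (c_lt iV).
case: (eqVneq i j) cj => [<- -> // | ij cj].
by move/c_proper: (bier_ghost_inl_inr_edge iK jg ij) => /(_ isT); rewrite cj eqxx.
Qed.

Lemma ghost_partner_cofacet a : a != g -> c (inr a) = c (inr g) -> ~: [set a; g] \in K.
Proof.
move=> ag ca; apply/negPn/negP => notK.
have edge : [set inr a; inr g] \in bier K.
  by rewrite bier_edge_inr complex_set0 // mem_alex_dual notK.
by move/c_proper: edge => /(_ ag); rewrite ca eqxx.
Qed.

Lemma ghost_partner_not_vertex a : c (inr a) = c (inr g) -> [set a] \notin K.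
Proof.
move=> ca; apply/negP => aK; have ag : a != g by apply: contraNneq g_ghost => <-.
have edge : [set inl a; inr g] \in bier K.
  by rewrite bier_edge_inl_inr aK mem_alex_dual cofacet_notin ag.
by move/c_proper: edge => /(_ isT); rewrite colour_inl // ca eqxx.
Qed.

Lemma ghost_colouring_simplex_del2 : exists2 a, a != g & K = simplex_del2 a g.
Proof.
have [a ag ca] := colour_inr_onto (c_lt (bier_ghost_inr_vertex g)).
exists a => //; apply/setP => J; rewrite mem_simplex_del2; apply/idP/andP => [JK | [aJ gJ]].
  split; last exact: ghost_notin_face.
  apply: contra (ghost_partner_not_vertex ca) => aJ.
  by apply: K_complex.2 JK _; rewrite sub1set.
apply: K_complex.2 (ghost_partner_cofacet ag ca) _.
by rewrite subsetC subUset !sub1set !inE aJ gJ.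
Qed.

End Colouring.

Lemma ghost_bier_colorable_standard : colorable (bier K) m.-1 -> standard_complex K.
Proof.
case=> c [c_lt c_proper].
have [cofacetK | cofacet_notin] := boolP (~: [set g] \in K).
  by constructor 1; exists g; apply: ghost_cofacet.
have [a ag ->] := ghost_colouring_simplex_del2 cofacet_notin c_lt c_proper.
by constructor 2; exists a, g.
Qed.

End GhostVertex.

Lemma ghost_of_f0_lt m (L : {set {set 'I_m}}) : f0 L < m -> exists g, [set g] \notin L.
Proof.
move=> few; have /subsetPn [g _ gV] : ~~ ([set: 'I_m] \subset verts L).
  by apply: contraTN few => /subset_leq_card; rewrite cardsT card_ord -leqNgt.
by exists g; rewrite -in_verts.
Qed.

Lemma bier_colorable_standard m (K : {set {set 'I_m}}) :
  is_complex K -> K != simplex [set: 'I_m] -> f0 K < m \/ f0 (alex_dual K) < m ->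
  colorable (bier K) m.-1 -> standard_complex K.
Proof.
move=> K_complex K_full [] /ghost_of_f0_lt [g g_ghost] col.
  exact: ghost_bier_colorable_standard K_complex g_ghost col.
apply: standard_complex_alex_dual.
exact: ghost_bier_colorable_standard (alex_dual_complex K_complex K_full) g_ghost
         (colorable_bier_alex_dual col).
Qed.

Lemma relabel_simplex m (s : {perm 'I_m}) (A : {set 'I_m}) :
  relabel s (simplex A) = simplex (s @: A).
Proof.
apply/setP => G; rewrite /relabel /simplex powersetE; apply/imsetP/idP.
  by case=> F; rewrite powersetE => FA ->; apply: imsetS.
move=> GA; exists (s^-1%g @: G); last by rewrite -imset_comp (eq_imset _ (permKV s)) imset_id.
rewrite powersetE; apply/subsetP => _ /imsetP [y /(subsetP GA) /imsetP [z zA ->] ->].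
by rewrite permK.
Qed.

Lemma perm_imsetC m (s : {perm 'I_m}) (A : {set 'I_m}) : s @: (~: A) = ~: (s @: A).
Proof. by rewrite !(can2_imset_pre _ (permK s) (permKV s)) preimsetC. Qed.

Lemma relabel_simplex_del1 m (s : {perm 'I_m}) a :
  relabel s (simplex_del1 a) = simplex_del1 (s a).
Proof. by rewrite relabel_simplex perm_imsetC imset_set1. Qed.

Lemma relabel_simplex_del2 m (s : {perm 'I_m}) a b :
  relabel s (simplex_del2 a b) = simplex_del2 (s a) (s b).
Proof. by rewrite relabel_simplex perm_imsetC imsetU !imset_set1. Qed.

Lemma relabel_simplex_del1U m (s : {perm 'I_m}) a b :
  relabel s (simplex_del1U a b) = simplex_del1U (s a) (s b).
Proof. by rewrite /simplex_del1U -!relabel_simplex_del1 /relabel imsetU. Qed.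

Lemma relabelK m (s : {perm 'I_m}) : cancel (relabel s) (relabel s^-1%g).
Proof.
move=> K; rewrite /relabel -imset_comp -[RHS]imset_id; apply: eq_imset => F /=.
by rewrite -imset_comp (eq_imset _ (permK s)) imset_id.
Qed.

Lemma perm_map2 m (a b x y : 'I_m) : a != b -> x != y ->
  exists s : {perm 'I_m}, s a = x /\ s b = y.
Proof.
move=> ab xy; exists (tperm a x * tperm (tperm a x b) y)%g.
rewrite !permM tpermL tpermL; split => //; apply: tpermD; last by rewrite eq_sym.
by rewrite -[x in _ != x](tpermL a x) (inj_eq perm_inj) eq_sym.
Qed.

Lemma first_sub1 n : first n.+2 (n.+2 - 1) = ~: [set ord_max].
Proof.
apply/setP => i; rewrite !inE -val_eqE /=.
by have := ltn_ord i; move: (val i) => j; lia.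
Qed.

Lemma first_sub2 n : first n.+2 (n.+2 - 2) = ~: [set ord_max; inord n].
Proof.
apply/setP => i; rewrite !inE -!val_eqE /= inordK //.
by have := ltn_ord i; move: (val i) => j; lia.
Qed.

Lemma first_sub2_last n :
  first n.+2 (n.+2 - 2) :|: [set i : 'I_n.+2 | val i == n.+2 - 1] = ~: [set inord n].
Proof.
apply/setP => i; rewrite !inE -!val_eqE /= inordK //.
by have := ltn_ord i; move: (val i) => j; lia.
Qed.

Lemma relabel_first_standard n (K : {set {set 'I_n.+2}}) :
  (exists s : {perm 'I_n.+2},
     [\/ relabel s K = simplex (first n.+2 (n.+2 - 1)),
         relabel s K = simplex (first n.+2 (n.+2 - 2)) |
         relabel s K = simplex (first n.+2 (n.+2 - 1)) :|:
                       simplex (first n.+2 (n.+2 - 2) :|: [set i | val i == n.+2 - 1])])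
  <-> standard_complex K.
Proof.
rewrite first_sub2_last first_sub1 first_sub2.
rewrite -[simplex (~: [set ord_max])]/(simplex_del1 ord_max).
rewrite -[simplex (~: [set ord_max; _])]/(simplex_del2 ord_max (inord n)).
rewrite -[simplex (~: [set inord n])]/(simplex_del1 (inord n)).
rewrite -[_ :|: simplex_del1 _]/(simplex_del1U ord_max (inord n)).
have last_neq : ord_max != inord n :> 'I_n.+2 by rewrite -val_eqE /= inordK //; lia.
split=> [[s] | ].
  case=> /(congr1 (relabel s^-1%g)); rewrite relabelK => ->.
  - by constructor 1; exists (s^-1%g ord_max); rewrite relabel_simplex_del1.
  - constructor 2; exists (s^-1%g ord_max), (s^-1%g (inord n)).
    by rewrite (inj_eq perm_inj) relabel_simplex_del2.
  - constructor 3; exists (s^-1%g ord_max), (s^-1%g (inord n)).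
    by rewrite (inj_eq perm_inj) relabel_simplex_del1U.
case=> [[a ->] | [a [b [ab ->]]] | [a [b [ab ->]]]].
- by exists (tperm a ord_max); constructor 1; rewrite relabel_simplex_del1 tpermL.
- have [s [sa sb]] := perm_map2 ab last_neq.
  by exists s; constructor 2; rewrite relabel_simplex_del2 sa sb.
- have [s [sa sb]] := perm_map2 ab last_neq.
  by exists s; constructor 3; rewrite relabel_simplex_del1U sa sb.
Qed.

Theorem mainTheorem7 (m : nat) (K : {set {set 'I_m}}) :
  3 <= m ->
  is_complex K ->
  K != simplex [set: 'I_m] ->
  (f0 K < m \/ f0 (alex_dual K) < m) ->
  let cases :=
    exists s : {perm 'I_m},
      let K' := relabel s K in
      [\/ K' = simplex (first m (m - 1)),
          K' = simplex (first m (m - 2)) |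
          K' = simplex (first m (m - 1)) :|:
               simplex (first m (m - 2) :|: [set i : 'I_m | val i == m - 1])] in
  (chromatic_number (bier K) (m - 1) <-> cases) /\
  (cases -> sc_iso (bier K) (iter_susp_Z4 (m - 3))).
Proof.
case: m K => [|[|[|k]]] K // _ K_complex K_full few_verts /=.
have cases_standard := relabel_first_standard K.
rewrite subn1 (_ : k.+3 - 3 = k); last by lia.
split; first split.
- by case=> /(bier_colorable_standard K_complex K_full few_verts) /cases_standard.
- by move/cases_standard/standard_bier_chromatic.
- by move/cases_standard/standard_bier_sc_iso.
Qed.
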